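(* In the setting described in the context, fix $t\in\mathbb{Z}_+$ and $\delta\in(0,1)$, let $\widehat k$ be any element of $\mathop{\mathrm{argmin}}_{k\in[t]}\{\widehat\phi(t,k,\delta)+\widehat\psi(t,k,\delta)\}$, and suppose that (on some realization of the data) $|\widehat{\mu}_{t,k}-\mu_t|\le\phi(t,k)+\widehat\psi(t,k,\delta)$ holds for every $k\in[t]$. Then $$|\widehat\mu_{t,\widehat k}-\mu_t|\le 3\min_{k\in[t]}\big\{\phi(t,k)+\widehat\psi(t,k,\delta)\big\}.$$
   Context: Let $a<b$ be real numbers, $M=b-a$, and $t\in\mathbb{Z}_+$. For each $j\in[t]$ let $\mathcal{Q}_j$ be a probability distribution on $[a,b]$ with mean $\mu_j$, and let $B_j\ge 1$ be an integer; the data are $u_{j,i}\in[a,b]$, $j\in[t]$, $i\in[B_j]$ (with $u_{j,i}\sim\mathcal{Q}_j$ independent). For $k\in[t]$ define $B_{t,k}=\sum_{j=t-k+1}^t B_j$, $\widehat{\mu}_{t,k}=\frac{1}{B_{t,k}}\sum_{j=t-k+1}^t\sum_{i=1}^{B_j}u_{j,i}$, $\phi(t,k)=\max_{t-k+1\le j\le t}|\mu_j-\mu_t|$, when $B_{t,k}\ge2$, $\widehat v_{t,k}^2=\frac{1}{B_{t,k}-1}\sum_{j=t-k+1}^t\sum_{i=1}^{B_j}(u_{j,i}-\widehat\mu_{t,k})^2$ with $\widehat v_{t,k}\ge0$, and for $\delta\in(0,1)$ $$\widehat\psi(t,k,\delta)=\begin{cases} M, & B_{t,k}=1,\\ \widehat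 v_{t,k}\sqrt{\frac{2\log(2/\delta)}{B_{t,k}}}+\frac{8M\log(2/\delta)}{3(B_{t,k}-1)}, & B_{t,k}\ge 2,\end{cases}\qquad \widehat\phi(t,k,\delta)=\max_{i\in[k]}\Big(|\widehat\mu_{t,k}-\widehat\mu_{t,i}|-\big[\widehat\psi(t,k,\delta)+\widehat\psi(t,i,\delta)\big]\Big)_+,$$ where $x_+=\max\{x,0\}$. *)

From HB Require Import structures.
From mathcomp Require Import all_boot all_order all_algebra.
From mathcomp Require Import all_classical all_reals all_analysis.
Set Implicit Arguments. Unset Strict Implicit. Unset Printing Implicit Defensive.
Import Order.TTheory GRing.Theory Num.Theory.
Local Open Scope ring_scope.

(* Indices are 1-based: blocks j in [t-k+1, t], samples i in [1, B j].
   Data u j i, batch sizes B j, means mu j. *)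
Section Defs.
Variable R : realType.

Definition Btk (B : nat -> nat) (t k : nat) : nat :=
  (\sum_(t - k + 1 <= j < t.+1) B j)%N.

Definition muhat (u : nat -> nat -> R) (B : nat -> nat) (t k : nat) : R :=
  (\sum_(t - k + 1 <= j < t.+1) \sum_(1 <= i < (B j).+1) u j i) / (Btk B t k)%:R.

Definition vhat (u : nat -> nat -> R) (B : nat -> nat) (t k : nat) : R :=
  Num.sqrt ((\sum_(t - k + 1 <= j < t.+1) \sum_(1 <= i < (B j).+1)
               (u j i - muhat u B t k) ^+ 2) / (Btk B t k - 1)%:R).

(* \hat psi(t,k,delta) with M = b - a *)
Definition psihat (M : R) (u : nat -> nat -> R) (B : nat -> nat)
    (t k : nat) (delta : R) : R :=
  if Btk B t k == 1%N then M
  else vhat u B t k * Num.sqrt (2 * ln (2 / delta) / (Btk B t k)%:R)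
       + 8 * M * ln (2 / delta) / (3 * (Btk B t k - 1)%:R).

(* phi(t,k) = max_{t-k+1 <= j <= t} |mu_j - mu_t| (all terms are >= 0) *)
Definition phi (mu : nat -> R) (t k : nat) : R :=
  \big[Num.max/0]_(t - k + 1 <= j < t.+1) `|mu j - mu t|.

Definition phihat (M : R) (u : nat -> nat -> R) (B : nat -> nat)
    (t k : nat) (delta : R) : R :=
  \big[Num.max/0]_(1 <= i < k.+1)
     Num.max (`|muhat u B t k - muhat u B t i|
              - (psihat M u B t k delta + psihat M u B t i delta)) 0.

(* min_{k in [t]} f k, for t >= 1 (the k = 1 term seeds the fold) *)
Definition min_over (t : nat) (f : nat -> R) : R :=
  \big[Num.min/f 1%N]_(1 <= k < t.+1) f k.

End Defs.

From HB Require Import structures.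
From mathcomp Require Import all_boot all_order all_algebra.
From mathcomp Require Import all_classical all_reals all_analysis.
From mathcomp Require Import lra zify.
Import Order.TTheory GRing.Theory Num.Theory.
Local Open Scope ring_scope.

(* On the good event, for i <= k both muhat_k and muhat_i lie within
   phi(t,k) + psihat of mu_t (phi is nondecreasing in k), so every term of
   phihat(t,k) is at most 2 phi(t,k).  Compare khat with any k: if khat <= k,
   the argmin property and monotonicity of phi give the bound directly; if
   k < khat, the term i = k of phihat(t,khat) controls
   |muhat_khat - muhat_k|, and the triangle inequality through muhat_k
   closes the argument.  Nothing probabilistic is used: the argument works
   for any estimates m_k, nondecreasing bias bounds and widths psi_k >= 0. *)

Section LepskiSelection.
Variable R : realDomainType.
Implicit Types (m psi bias : nat -> R) (x : R).

Definition lepski_phihat m psi (k : nat) : R :=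
  \big[Num.max/0]_(1 <= i < k.+1) Num.max (`|m k - m i| - (psi k + psi i)) 0.

Lemma lepski_phihat_ge0 m psi k : 0 <= lepski_phihat m psi k.
Proof. exact: bigmax_ge_id. Qed.

Lemma le_lepski_phihat m psi k i : (1 <= i <= k)%N ->
  `|m k - m i| - (psi k + psi i) <= lepski_phihat m psi k.
Proof.
move=> ik; apply: (@bigmax_sup_seq _ _ _ _ _ i) => //.
  by rewrite mem_index_iota; lia.
by rewrite le_max lexx.
Qed.

Variables (t : nat) (x : R) (m psi bias : nat -> R).
Hypothesis psi_ge0 : forall k, 0 <= psi k.
Hypothesis bias_ge0 : forall k, 0 <= bias k.
Hypothesis bias_homo : {homo bias : i k / (i <= k)%N >-> i <= k}.
Hypothesis good_event :
  forall k, (1 <= k <= t)%N -> `|m k - x| <= bias k + psi k.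

Lemma lepski_phihat_le_bias k : (1 <= k <= t)%N ->
  lepski_phihat m psi k <= 2 * bias k.
Proof.
move=> kt; rewrite /lepski_phihat big_nat_cond.
apply: bigmax_le => [|i /andP[ik _]].
  by have := bias_ge0 k; lra.
rewrite ge_max; apply/andP; split; last by have := bias_ge0 k; lra.
have mk := good_event k kt.
have mi : `|m i - x| <= bias i + psi i by apply: good_event; lia.
have bik : bias i <= bias k by apply: bias_homo; lia.
have := ler_distD x (m k) (m i); rewrite (distrC x); lra.
Qed.

Lemma lepski_oracle khat :
  (1 <= khat <= t)%N ->
  (forall k, (1 <= k <= t)%N ->
     lepski_phihat m psi khat + psi khat <= lepski_phihat m psi k + psi k) ->
  forall k, (1 <= k <= t)%N -> `|m khat - x| <= 3 * (bias k + psi k).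
Proof.
move=> khat_t argmin k kt.
have sel := argmin k kt.
have phk := lepski_phihat_le_bias k kt.
have mkhat := good_event khat khat_t.
have ph0 := lepski_phihat_ge0 m psi khat.
have := psi_ge0 k.
have [le_khat_k | lt_k_khat] := leqP khat k.
  have := bias_homo khat k le_khat_k; lra.
have cmp : `|m khat - m k| - (psi khat + psi k) <= lepski_phihat m psi khat.
  by apply: le_lepski_phihat; lia.
have := good_event k kt.
have := ler_distD (m k) (m khat) x; lra.
Qed.

End LepskiSelection.

Lemma le_min_over {R : realType} (t : nat) (f : nat -> R) c :
  (0 < t)%N -> (forall k, (1 <= k <= t)%N -> c <= f k) -> c <= min_over t f.
Proof.
move=> t0 cf; rewrite /min_over big_nat_cond; apply: le_bigmin.
  exact: cf.
by move=> k /andP[kt _]; apply: cf; lia.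
Qed.

Lemma phi_ge0 {R : realType} (mu : nat -> R) t k : 0 <= phi mu t k.
Proof. exact: bigmax_ge_id. Qed.

Lemma phi_homo {R : realType} (mu : nat -> R) t :
  {homo phi mu t : i k / (i <= k)%N >-> i <= k}.
Proof. by move=> i k ik; apply: le_bigmax_nat; lia. Qed.

Lemma psihat_ge0 {R : realType} (M : R) u B t k delta :
  0 < M -> 0 < delta < 1 -> 0 <= psihat M u B t k delta.
Proof.
move=> M0 /andP[d0 d1]; rewrite /psihat; case: ifP => _; first exact: ltW.
have l0 : 0 <= ln (2 / delta) by apply: ln_ge0; rewrite ler_pdivlMr //; lra.
apply: addr_ge0; first by rewrite mulr_ge0 ?sqrtr_ge0.
by rewrite divr_ge0 ?mulr_ge0 ?ler0n // ltW.
Qed.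

Theorem mainTheorem5 (R : realType) (a b : R) (t : nat) (delta : R)
    (B : nat -> nat) (u : nat -> nat -> R) (mu : nat -> R) (khat : nat) :
  a < b ->
  (0 < t)%N ->
  0 < delta < 1 ->
  (forall j, (1 <= j <= t)%N -> (1 <= B j)%N) ->
  (forall j, (1 <= j <= t)%N -> a <= mu j <= b) ->
  (forall j i, (1 <= j <= t)%N -> (1 <= i <= B j)%N -> a <= u j i <= b) ->
  (* khat is an argmin over k in [t] of phihat + psihat *)
  (1 <= khat <= t)%N ->
  (forall k, (1 <= k <= t)%N ->
     phihat (b - a) u B t khat delta + psihat (b - a) u B t khat delta
     <= phihat (b - a) u B t k delta + psihat (b - a) u B t k delta) ->
  (* the good event, on this realization *)
  (forall k, (1 <= k <= t)%N ->
     `|muhat u B t k - mu t| <= phi mu t k + psihat (b - a) u B t k delta) ->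
  `|muhat u B t khat - mu t|
    <= 3 * min_over t (fun k => phi mu t k + psihat (b - a) u B t k delta).
Proof.
(* The range hypotheses on the data only matter for the probability of the
   good event, which is assumed here. *)
move=> ab t0 delta01 _ _ _ khat_t argmin good.
have psi_ge0 k : 0 <= psihat (b - a) u B t k delta.
  by apply: psihat_ge0 => //; rewrite subr_gt0.
(* [phihat] unfolds to [lepski_phihat], so [argmin] applies as is. *)
have oracle := @lepski_oracle _ t (mu t) (muhat u B t)
  (psihat (b - a) u B t ^~ delta) (phi mu t)
  psi_ge0 (phi_ge0 mu t) (phi_homo mu t) good khat khat_t argmin.
set f := fun k => phi mu t k + psihat (b - a) u B t k delta.
suff : `|muhat u B t khat - mu t| / 3 <= min_over t f by lra.
by apply: le_min_over => // k kt; have := oracle k kt; rewrite /f; lra.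
Qed.
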